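(* Consider the deterministic discrete-time LTI system $$\bar x_{k+1}=\mathcal{A}_\mathrm{L}\bar x_k+\mathcal{B}_\mathrm{L}u_k,\qquad y_k=\begin{bmatrix}\mathcal{C}&\mathcal{C}_\mathrm{d}\end{bmatrix}\bar x_k+\mathcal{D}u_k,$$ with $\bar x_k=[x_k^\top\ d_k^\top]^\top\in\mathbb{R}^{\bar n}$, $x_k\in\mathbb{R}^{n_\mathrm{x}}$, $d_k\in\mathbb{R}^{n_\mathrm{d}}$, $\bar n=n_\mathrm{x}+n_\mathrm{d}$, $u_k\in\mathbb{R}^{n_\mathrm{u}}$, $y_k\in\mathbb{R}^{n_\mathrm{y}}$, $\mathcal{A}_\mathrm{L}=\begin{bmatrix}\mathcal{A}&\mathcal{B}_\mathrm{d}\\0&\mathcal{A}_\mathrm{d}\end{bmatrix}$, $\mathcal{B}_\mathrm{L}=\begin{bmatrix}\mathcal{B}\\0\end{bmatrix}$. Let $\{u^\mathrm{m}_k\}_{k=0}^{N+L+\bar n-2}$ be a measured input sequence with resulting state trajectory $\bar x^\mathrm{m}_k=[(x^\mathrm{m}_k)^\top\ (d^\mathrm{m}_k)^\top]^\top$ and output trajectory $y^\mathrm{m}_k$. Assume that $(\mathcal{A},\mathcal{B})$ is controllable, that the controllability matrix $\mathcal{K}_\mathrm{d}:=\begin{bmatrix}d^\mathrm{m}_0&\mathcal{A}_\mathrm{d}d^\mathrm{m}_0&\cdots&\mathcal{A}_\mathrm{d}^{n_\mathrm{d}-1}d^\mathrm{m}_0\end{bmatrix}$ has rank $\nu$ with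 $1\le\nu<n_\mathrm{d}$, and that $\{u^\mathrm{m}_k\}$ is persistently exciting of order $L+\bar n$. Then: (i) $\operatorname{rank}\begin{bmatrix}\mathcal{H}_{0,1,N+\bar n}(\bar x^\mathrm{m})\\ \mathcal{H}_{0,L,N+\bar n}(u^\mathrm{m})\end{bmatrix}=Ln_\mathrm{u}+n_\mathrm{x}+\nu$; (ii) for every $x_0\in\mathbb{R}^{n_\mathrm{x}}$, every $d_0$ in the column space of $\mathcal{K}_\mathrm{d}$, and every $u_{[0,L-1]}\in\mathbb{R}^{Ln_\mathrm{u}}$, with $\bar x_0=[x_0^\top\ d_0^\top]^\top$, there exists $g\in\mathbb{R}^{N+\bar n}$ such that $$\begin{bmatrix}\mathcal{H}_{0,1,N+\bar n}(\bar x^\mathrm{m})\\ \mathcal{H}_{0,L,N+\bar n}(u^\mathrm{m})\end{bmatrix}g=\begin{bmatrix}\bar x_0\\ u_{[0,L-1]}\end{bmatrix};$$ (iii) for every $L$-long input-output trajectory $(u_{[0,L-1]},y_{[0,L-1]})$ of the system whose initial state $\bar x_0=[x_0^\top\ d_0^\top]^\top$ has $d_0$ in the column space of $\mathcal{K}_\mathrm{d}$, there exists $g\in\mathbb{R}^{N+\bar n}$ such that $$\begin{bmatrix}\mathcal{H}_{0,L,N+\bar n}(u^\mathrm{m})\\ \mathcal{H}_{0,L,N+\bar n}(y^\mathrm{m})\end{bmatrix}g=\begin{bmatrix}u_{[0,L-1]}\\ y_{[0,L-1]}\end{bmatrix}.$$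
   Context: For a sequence $\{w_k\}$ and integers $i$, $s\ge1$, $N\ge1$, the block-Hankel matrix $\mathcal{H}_{i,s,N}(w)$ is the matrix with $s$ block rows and $N$ columns whose $(a,b)$ block entry is $w_{i+a+b-2}$ (first row $[w_i\ \cdots\ w_{i+N-1}]$, last row $[w_{i+s-1}\ \cdots\ w_{i+N+s-2}]$). A sequence $\{w_k\}_{k=i}^{i+N+s-2}$ is persistently exciting of order $s$ if $\mathcal{H}_{i,s,N}(w)$ has full row rank. The stacked vector $u_{[k_1,k_2]}:=[u_{k_1}^\top\ u_{k_1+1}^\top\ \cdots\ u_{k_2}^\top]^\top$, and similarly for $y$. A pair $(A,B)$ with $A\in\mathbb{R}^{q\times q}$ is controllable if $[B\ AB\ \cdots\ A^{q-1}B]$ has rank $q$. *)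

From mathcomp Require Import all_boot all_order all_algebra.
Set Implicit Arguments. Unset Strict Implicit. Unset Printing Implicit Defensive.
Import GRing.Theory Num.Theory.
Local Open Scope ring_scope.

Definition hankel (R : pzRingType) (p : nat) (w : nat -> 'cV[R]_p) (i s N : nat)
  : 'M[R]_(\sum_(a < s) p, N) :=
  \mxcol_(a < s) (\matrix_(j < p, b < N) w (i + a + b)%N j ord0).

Definition stack (R : pzRingType) (p : nat) (w : nat -> 'cV[R]_p) (L : nat)
  : 'cV[R]_(\sum_(a < L) p) := \mxcol_(a < L) w a.

Definition pers_exc (R : fieldType) (p : nat) (w : nat -> 'cV[R]_p) (i s N : nat) :=
  row_free (hankel w i s N).

Definition ctrb_mx (R : pzRingType) (q m : nat) (A : 'M[R]_q) (B : 'M[R]_(q, m))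
  : 'M[R]_(q, \sum_(i < q) m) := \mxrow_(i < q) (A ^+ i *m B).

Definition controllable (R : fieldType) (q m : nat) (A : 'M[R]_q) (B : 'M[R]_(q, m)) :=
  \rank (ctrb_mx A B) = q.

Definition AL (R : pzRingType) (nx nd : nat) (A : 'M[R]_nx) (Bd : 'M[R]_(nx, nd))
  (Ad : 'M[R]_nd) : 'M[R]_(nx + nd) := block_mx A Bd 0 Ad.
Definition BL (R : pzRingType) (nx nd nu : nat) (B : 'M[R]_(nx, nu))
  : 'M[R]_(nx + nd, nu) := col_mx B 0.

Fixpoint traj (R : pzRingType) (n m : nat) (Ab : 'M[R]_n) (Bb : 'M[R]_(n, m))
  (x0 : 'cV[R]_n) (u : nat -> 'cV[R]_m) (k : nat) : 'cV[R]_n :=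
  match k with
  | 0 => x0
  | k'.+1 => Ab *m traj Ab Bb x0 u k' + Bb *m u k'
  end.

Definition outp (R : pzRingType) (n m ny : nat) (Ab : 'M[R]_n) (Bb : 'M[R]_(n, m))
  (Cb : 'M[R]_(ny, n)) (D : 'M[R]_(ny, m)) (x0 : 'cV[R]_n) (u : nat -> 'cV[R]_m)
  (k : nat) : 'cV[R]_ny := Cb *m traj Ab Bb x0 u k + D *m u k.

From mathcomp Require Import all_boot all_order all_algebra.
From Stdlib Require Import Lia.
From mathcomp Require Import zify.
Set Implicit Arguments. Unset Strict Implicit. Unset Printing Implicit Defensive.
Import GRing.Theory Num.Theory.
Local Open Scope ring_scope.

(* The data matrix [[X; U]] has the same column space as [diag(I, Kd, I)].
   Each of its columns [(xbar_k, u_k, ..., u_(k+L-1))] lies in the latter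
   because [d_k = Ad^k d0] lies in the range of [Kd].  Conversely, let
   [(th, eta)] annihilate the data matrix from the left.  The relations
   [th xbar_k + sum_a eta_a u_(k+a) = 0], shifted by [j <= n] steps and
   combined with the coefficients of the characteristic polynomial of [AL],
   yield a relation on the input alone, which persistency of excitation
   forces to be trivial.  Hence [eta = 0] and [th AL^i BL = 0]; controllability
   of [(A, B)] kills the [x]-part of [th], after which [th xbar_k = 0] says
   that its [d]-part annihilates [Kd].  Rank and solvability follow, and the
   input-output statement is obtained by superposition of shifted
   trajectories. *)

Section Hankel.
Variable R : fieldType.

Lemma col_hankel p (w : nat -> 'cV[R]_p) i s N k :
  col k (hankel w i s N) = \mxcol_(a < s) w (i + a + k)%N.
Proof.
rewrite /hankel col_mxcol; apply: eq_mxcol => a.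
by apply/matrixP => r c; rewrite !mxE (ord1 c).
Qed.

Lemma hankel_mulmx p (w : nat -> 'cV[R]_p) i s N (g : 'cV[R]_N) :
  hankel w i s N *m g = \mxcol_(a < s) \sum_(b < N) g b 0 *: w (i + a + b)%N.
Proof.
apply/matrixP => r c; rewrite !mxE summxE (ord1 c).
by apply: eq_bigr => b _; rewrite !mxE mulrC.
Qed.

Lemma col_mulmx_hankel p s (w : nat -> 'cV[R]_p) i N
    (v : 'rV_(\sum_(a < s) p)) k :
  col k (v *m hankel w i s N) = \sum_(a < s) submxrow v a *m w (i + a + k)%N.
Proof.
by rewrite colE -mulmxA -colE col_hankel -{1}[v]submxrowK mul_mxrow_mxcol.
Qed.

Lemma pers_exc_coef_eq0 p (w : nat -> 'cV[R]_p) i s N (c : 'I_s -> 'rV[R]_p) :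
  pers_exc w i s N ->
  (forall k, (k < N)%N -> \sum_(a < s) c a *m w (i + a + k)%N = 0) ->
  forall a, c a = 0.
Proof.
move=> /row_freeP[Bi hBi] hc a.
set v := \mxrow_(a < s) c a.
have hv : v *m hankel w i s N = 0.
  apply/trmx_inj/row_matrixP => k; rewrite trmx0 row0 -tr_col col_mulmx_hankel.
  under eq_bigr do rewrite mxrowK.
  by rewrite hc ?trmx0.
have v0 : v = 0 by rewrite -[v]mulmx1 -hBi mulmxA hv mul0mx.
by have := mxrowK (fun b => c b) a; rewrite -/v v0 submxrow0 => <-.
Qed.

End Hankel.

Lemma solve_by_left_kernel (R : fieldType) r M (H : 'M[R]_(r, M)) (t : 'cV[R]_r) :
  (forall w : 'rV[R]_r, w *m H = 0 -> w *m t = 0) -> exists g, H *m g = t.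
Proof.
move=> hker.
have : (t^T <= H^T)%MS.
  rewrite submxE; set K := cokermx H^T.
  have HK : K^T *m H = 0 by rewrite -[H]trmxK -trmx_mul mulmx_coker trmx0.
  have Kt : K^T *m t = 0.
    apply/row_matrixP => i; rewrite row_mul row0 hker //.
    by rewrite -row_mul HK row0.
  by rewrite -[_ *m K]trmxK trmx_mul trmxK Kt trmx0.
by case/submxP => D e; exists D^T; rewrite -[t]trmxK e trmx_mul trmxK.
Qed.

Lemma char_poly_coef_annihilates (R : fieldType) n (A : 'M[R]_n) :
  exists c : nat -> R, c n = 1 /\ \sum_(j < n.+1) c j *: A ^+ j = 0.
Proof.
case: n A => [|n] A.
  by exists (fun _ => 1); split => //; apply/matrixP => -[].
have lc : lead_coef (char_poly A) = 1 by apply/monicP/char_poly_monic.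
exists (fun j => (char_poly A)`_j); split.
  by move: lc; rewrite lead_coefE size_char_poly.
have := Cayley_Hamilton A.
rewrite /horner_mx /horner_morph horner_coef size_map_poly_id0; last first.
  by rewrite lc oner_neq0.
rewrite size_char_poly => CH; rewrite -[RHS]CH; apply: eq_bigr => j _.
by rewrite coef_map_id0 ?raddf0 // -mul_scalar_mx mulmxE.
Qed.

Lemma exprSmx (R : pzRingType) n p (A : 'M[R]_n) (v : 'M[R]_(n, p)) j :
  A ^+ j.+1 *m v = A *m (A ^+ j *m v).
Proof. by rewrite exprS mulmxA. Qed.

Lemma exp_mul_sub_ctrb (R : fieldType) q m (A : 'M[R]_q) (B : 'M[R]_(q, m)) k :
  ((A ^+ k *m B)^T <= (ctrb_mx A B)^T)%MS.
Proof.
have [c [cq csum]] := char_poly_coef_annihilates A.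
elim/ltn_ind: k => k IH; case: (ltnP k q) => hk.
  rewrite /ctrb_mx tr_mxrow.
  have := mxcolK (fun i : 'I_q => (A ^+ i *m B)^T) (Ordinal hk) => /= <-.
  by rewrite /submxcol rowsubE submxMl.
have Aq : A ^+ q = - \sum_(j < q) c j *: A ^+ j.
  by move: csum; rewrite big_ord_recr /= cq scale1r addrC => /eqP; rewrite addr_eq0 => /eqP.
rewrite -(subnK hk) exprD Aq mulrN mulr_sumr mulNmx mulmx_suml linearN linear_sum /=.
rewrite eqmx_opp summx_sub // => j _.
rewrite -[_ * _]/(_ *m _) -scalemxAr -scalemxAl linearZ scalemx_sub //.
rewrite -[_ *m A ^+ j]/(_ * _) -exprD IH //.
by have := ltn_ord j; lia.
Qed.

Section Annihilator.
Variables (R : fieldType) (n m : nat) (Ab : 'M[R]_n) (Bb : 'M[R]_(n, m)).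
Variables (u : nat -> 'cV[R]_m) (x : nat -> 'cV[R]_n).
Hypothesis x_step : forall k, x k.+1 = Ab *m x k + Bb *m u k.

Lemma traj_shift k j : x (k + j)%N = Ab ^+ j *m x k
   + \sum_(p < j) Ab ^+ (j - 1 - p) *m Bb *m u (k + p)%N.
Proof.
elim: j => [|j IH]; first by rewrite addn0 big_ord0 expr0 mul1mx addr0.
rewrite addnS x_step IH big_ord_recr /= mulmxDr mulmx_sumr -exprSmx.
rewrite (_ : j.+1 - 1 - j = 0)%N ?expr0 ?mul1mx -?addrA; last by lia.
congr (_ + (_ + _)).
apply: eq_bigr => p _; rewrite !mulmxA -!mulmxA -exprSmx; congr (_ ^+ _ *m _).
by have := ltn_ord p; lia.
Qed.

Variables (L N : nat) (th : 'rV[R]_n) (eta : 'I_L -> 'rV[R]_m).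
Hypothesis hpe : pers_exc u 0 (L + n) N.
Hypothesis th_eta_ann :
  forall k, (k < N + n)%N -> th *m x k + \sum_(a < L) eta a *m u (k + a)%N = 0.

Let etan a : 'rV[R]_m := oapp eta 0 (insub a).

(* The relation at time [k + j], with [x (k + j)] expanded by [traj_shift],
   as a relation at time [k] whose input coefficients are [V j]. *)
Let V j p := if (p < j)%N then th *m Ab ^+ (j - 1 - p) *m Bb else etan (p - j).

Lemma annihilator_shift j k : (j <= n)%N -> (k < N)%N ->
  th *m Ab ^+ j *m x k + \sum_(p < L + n) V j p *m u (k + p)%N = 0.
Proof.
move=> jn kN; have := @th_eta_ann (k + j)%N ltac:(lia).
rewrite traj_shift mulmxDr mulmx_sumr -addrA mulmxA => ann.
rewrite -[RHS]ann; congr (_ + _).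
rewrite -(big_mkord xpredT (fun p => V j p *m u (k + p)%N)).
rewrite (big_cat_nat _ (n := j)) //= ?big_mkord; last by lia.
congr (_ + _); first by apply: eq_bigr => p _; rewrite /V ltn_ord !mulmxA.
rewrite -{1}[j]add0n big_addn (big_cat_nat _ (n := L)) //=; last by lia.
rewrite [X in _ + X]big_nat_cond [X in _ + X]big1 ?addr0 ?big_mkord.
  apply: eq_bigr => a _; rewrite /V ifN ?addnK /etan ?valK; last by lia.
  by congr (_ *m u _); lia.
move=> p /andP [/andP [Lp _] _]; rewrite /V ifN /etan ?insubF ?mul0mx //; lia.
Qed.

Lemma annihilator_charpoly : exists c : nat -> R,
  c n = 1 /\ forall p, (p < L + n)%N -> \sum_(j < n.+1) c j *: V j p = 0.
Proof.
have [c [cn csum]] := char_poly_coef_annihilates Ab.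
exists c; split => // p hp.
pose W (q : 'I_(L + n)) := \sum_(j < n.+1) c j *: V j q.
suff W0 q : W q = 0 by exact: (W0 (Ordinal hp)).
apply: pers_exc_coef_eq0 hpe _ q => k kN.
have : \sum_(j < n.+1) c j *: (th *m Ab ^+ j *m x k
      + \sum_(p < L + n) V j p *m u (k + p)%N) = 0.
  by apply: big1 => j _; rewrite annihilator_shift ?scaler0 //; have := ltn_ord j; lia.
rewrite (eq_bigr _ (fun j _ => scalerDr _ _ _)) big_split /=.
have -> : \sum_(j < n.+1) c j *: (th *m Ab ^+ j *m x k) = 0.
  rewrite -[RHS](mul0mx _ (x k)) -(mulmx0 _ th) -csum mulmx_sumr mulmx_suml.
  by apply: eq_bigr => j _; rewrite -scalemxAr -scalemxAl.
rewrite add0r => ann; rewrite -[RHS]ann /W.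
under eq_bigr do rewrite mulmx_suml add0n (addnC _ k).
rewrite exchange_big /=; apply: eq_bigr => j _.
by rewrite scaler_sumr; apply: eq_bigr => q _; rewrite scalemxAl.
Qed.

Lemma annihilator_input_eq0 a : eta a = 0.
Proof.
(* Downward induction: in [cV (n + q)] only [j = n] contributes [eta q], with
   coefficient [c n = 1]; the other terms involve [eta] at larger indices. *)
have [c [cn cV]] := annihilator_charpoly.
suff etan0 q : etan q = 0 by have := etan0 a; rewrite /etan valK.
have [s] := ubnP (L - q); elim: s q => [|s IH] q hq; first by lia.
case: (leqP L q) => [Lq|qL]; first by rewrite /etan insubF //; lia.
have := cV (n + q)%N ltac:(lia); rewrite big_ord_recr /= /V ifN ?addKn; last by lia.
rewrite cn scale1r big1 ?add0r // => j _.
by rewrite ifN ?IH ?scaler0 //; have := ltn_ord j; lia.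
Qed.

Lemma annihilator_ctrb i : (i < n)%N -> th *m Ab ^+ i *m Bb = 0.
Proof.
(* In [cV (n - 1 - i)] the term [j = n] is [th Ab^i Bb]; the others are
   [th Ab^i' Bb] with [i' < i] or values of [eta]. *)
have [c [cn cV]] := annihilator_charpoly.
elim/ltn_ind: i => i IH hin.
have := cV (n - 1 - i)%N ltac:(lia); rewrite big_ord_recr /= /V ifT; last by lia.
rewrite (_ : n - 1 - (n - 1 - i) = i)%N; last by lia.
rewrite cn scale1r big1 ?add0r // => j _.
case: ifP => h; last by rewrite /etan; case: insubP => [a _ _ /=|_];
  rewrite ?annihilator_input_eq0 scaler0.
by rewrite IH ?scaler0 //; have := ltn_ord j; move: h => /=; lia.
Qed.

End Annihilator.

Section Trajectory.
Variables (R : fieldType) (n m : nat) (Ab : 'M[R]_n) (Bb : 'M[R]_(n, m)).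

Lemma eq_traj x0 (u u' : nat -> 'cV[R]_m) k :
  (forall p, (p < k)%N -> u p = u' p) -> traj Ab Bb x0 u k = traj Ab Bb x0 u' k.
Proof. by elim: k => [|k IH] eq_u //=; rewrite IH ?eq_u // => p pk; apply: eq_u; lia. Qed.

Lemma lincomb_shifted_traj M (g : 'cV[R]_M) x0 (u : nat -> 'cV[R]_m) a :
  \sum_(b < M) g b 0 *: traj Ab Bb x0 u (a + b)%N =
  traj Ab Bb (\sum_(b < M) g b 0 *: traj Ab Bb x0 u b)
             (fun p => \sum_(b < M) g b 0 *: u (p + b)%N) a.
Proof.
elim: a => [|a IH] //=.
rewrite -IH !mulmx_sumr -big_split /=; apply: eq_bigr => b _.
by rewrite scalerDr !scalemxAr.
Qed.

End Trajectory.

Lemma rank_mxcol1 (R : fieldType) m n (X : 'M[R]_(m, n)) :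
  \rank (\mxcol_(a < 1) X) = \rank X.
Proof. by rewrite [in RHS](mxEmxcol X) eqmx_cast. Qed.

Section AugmentedSystem.
Variables (R : fieldType) (nx nd nu : nat).
Variables (A : 'M[R]_nx) (Bd : 'M[R]_(nx, nd)) (Ad : 'M[R]_nd) (B : 'M[R]_(nx, nu)).

Local Notation Ab := (AL A Bd Ad).
Local Notation Bb := (BL nd B).

Lemma dsubmx_traj_AL x0 d0 u k :
  dsubmx (traj Ab Bb (col_mx x0 d0) u k) = Ad ^+ k *m d0.
Proof.
elim: k => [|k IH] /=; first by rewrite col_mxKd expr0 mul1mx.
set t := traj _ _ _ _ k; rewrite -[t]vsubmxK /AL /BL mul_block_col mul_col_mx.
by rewrite add_col_mx col_mxKd IH mul0mx !add0r mul0mx addr0 exprSmx.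
Qed.

Lemma AL_exp_mul_BL i : Ab ^+ i *m Bb = col_mx (A ^+ i *m B) 0.
Proof.
elim: i => [|i IH]; first by rewrite !expr0 !mul1mx.
by rewrite !exprSmx IH /AL mul_block_col !mulmx0 mul0mx !addr0.
Qed.

Variables (N L : nat) (um : nat -> 'cV[R]_nu) (xm0 : 'cV[R]_nx) (dm0 : 'cV[R]_nd).
Hypothesis ctrl : controllable A B.
Hypothesis pe : pers_exc um 0 (L + (nx + nd)) N.

Local Notation M := (N + (nx + nd))%N.
Local Notation xbm := (traj Ab Bb (col_mx xm0 dm0) um).
Local Notation Kd := (ctrb_mx Ad dm0).
Local Notation data_mx := (col_mx (hankel xbm 0 1 M) (hankel um 0 L M)).

Definition admissible_mx :
    'M[R]_(\sum_(a < 1) (nx + nd) + \sum_(a < L) nu,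
           (nx + \sum_(i < nd) 1) + \sum_(a < L) nu) :=
  block_mx (\mxcol_(a < 1) block_mx 1%:M 0 0 Kd) 0 0 1%:M.

Lemma admissible_mxE x0 v (s : 'cV[R]_(\sum_(a < L) nu)) :
  admissible_mx *m col_mx (col_mx x0 v) s =
  col_mx (\mxcol_(a < 1) col_mx x0 (Kd *m v)) s.
Proof.
rewrite mul_block_col !mul0mx mul1mx addr0 add0r mxcol_mul.
congr col_mx; apply: eq_mxcol => a.
by rewrite mul_block_col !mul1mx !mul0mx addr0 add0r.
Qed.

Lemma rank_admissible_mx : \rank admissible_mx = (L * nu + nx + \rank Kd)%N.
Proof.
rewrite rank_diag_block_mx rank_mxcol1 rank_diag_block_mx !mxrank1.
by rewrite [\sum_(a < L) nu]sum_nat_const card_ord; lia.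
Qed.

Lemma data_annihilator_state (th : 'rV[R]_(nx + nd)) (eta : 'I_L -> 'rV[R]_nu) :
  (forall k, (k < M)%N -> th *m xbm k + \sum_(a < L) eta a *m um (k + a)%N = 0) ->
  lsubmx th = 0 /\ rsubmx th *m Kd = 0.
Proof.
move=> ann; have x_step k : xbm k.+1 = Ab *m xbm k + Bb *m um k by [].
have th_xi : lsubmx th = 0.
  have [Ci hCi] := row_freeP (introT eqP ctrl).
  suff e : lsubmx th *m ctrb_mx A B = 0.
    by rewrite -[lsubmx th]mulmx1 -hCi mulmxA e mul0mx.
  rewrite mul_mxrow -(mxrow0 (q_ := fun _ : 'I_nx => nu)).
  apply: eq_mxrow => i; have := annihilator_ctrb x_step pe ann (ltn_addr nd (ltn_ord i)).
  by rewrite -mulmxA AL_exp_mul_BL -{1}[th]hsubmxK mul_row_col mulmx0 addr0.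
split=> //; rewrite mul_mxrow -(mxrow0 (q_ := fun _ : 'I_nd => 1%N)).
apply: eq_mxrow => i; have := ann i ltac:(have := ltn_ord i; lia).
rewrite big1 => [|a _]; last by rewrite (annihilator_input_eq0 x_step pe ann) mul0mx.
rewrite addr0 -{1}[th]hsubmxK -{1}[xbm i]vsubmxK mul_row_col th_xi mul0mx add0r.
by rewrite dsubmx_traj_AL.
Qed.

Lemma data_left_ker_sub (w : 'rV[R]_(\sum_(a < 1) (nx + nd) + \sum_(a < L) nu)) :
  w *m data_mx = 0 -> w *m admissible_mx = 0.
Proof.
move=> ann; set th := submxrow (lsubmx w) ord0; set eta := submxrow (rsubmx w).
have ann_k k : (k < M)%N -> th *m xbm k + \sum_(a < L) eta a *m um (k + a)%N = 0.
  move=> hk; have := congr1 (col (Ordinal hk)) ann.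
  rewrite -[w]hsubmxK mul_row_col colE mulmxDl -!colE !col_mulmx_hankel col0.
  rewrite big_ord1 !add0n => hk0; rewrite -[RHS]hk0; congr (_ + _).
  by apply: eq_bigr => a _; rewrite add0n addnC.
have x_step k : xbm k.+1 = Ab *m xbm k + Bb *m um k by [].
have [th_xi th_ze] := data_annihilator_state ann_k.
have eta0 : rsubmx w = 0.
  rewrite -[rsubmx w]submxrowK -(mxrow0 (q_ := fun _ : 'I_L => nu)).
  by apply: eq_mxrow => a; apply: (annihilator_input_eq0 x_step pe ann_k).
rewrite -[w]hsubmxK mul_row_block !mulmx0 addr0 add0r mulmx1 eta0.
rewrite -[lsubmx w]submxrowK mul_mxrow_mxcol big_ord1 -/th -[th]hsubmxK.
by rewrite mul_row_block !mulmx1 !mulmx0 addr0 add0r th_xi th_ze !row_mx0.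
Qed.

Lemma admissible_sub_data (z : 'cV[R]_((nx + \sum_(i < nd) 1) + \sum_(a < L) nu)) : exists g, data_mx *m g = admissible_mx *m z.
Proof.
by apply: solve_by_left_kernel => w hw; rewrite mulmxA data_left_ker_sub ?mul0mx.
Qed.

Lemma data_sub_admissible k : exists z, col k data_mx = admissible_mx *m z.
Proof.
have /submxP[v /(congr1 trmx)] := exp_mul_sub_ctrb Ad dm0 k.
rewrite trmxK trmx_mul trmxK => ev.
exists (col_mx (col_mx (usubmx (xbm k)) v^T) (\mxcol_(a < L) um (0 + a + k)%N)).
rewrite admissible_mxE col_col_mx !col_hankel -ev -(dsubmx_traj_AL xm0 dm0 um).
by congr col_mx; apply: eq_mxcol => a; rewrite (ord1 a) vsubmxK.
Qed.

Lemma data_eqmx_admissible : (data_mx^T == admissible_mx^T)%MS.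
Proof.
apply/andP; split; apply/row_subP => k; rewrite -tr_col.
  by have [z ->] := data_sub_admissible k; rewrite trmx_mul submxMl.
have [g hg] := admissible_sub_data (delta_mx k 0).
by rewrite colE -hg trmx_mul submxMl.
Qed.

Lemma rank_data_mx : \rank data_mx = (L * nu + nx + \rank Kd)%N.
Proof.
by rewrite -mxrank_tr (eqmx_rank data_eqmx_admissible) mxrank_tr rank_admissible_mx.
Qed.

Lemma data_mx_solve x0 d0 (u : nat -> 'cV[R]_nu) : (exists v, d0 = Kd *m v) ->
  exists g, data_mx *m g = col_mx (stack (fun _ => col_mx x0 d0) 1) (stack u L).
Proof.
move=> [v ->]; have [g hg] := admissible_sub_data (col_mx (col_mx x0 v) (stack u L)).
by exists g; rewrite hg admissible_mxE.
Qed.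

Lemma io_data_mx_solve ny (Cb : 'M[R]_(ny, nx + nd)) (D : 'M[R]_(ny, nu))
    x0 d0 (u : nat -> 'cV[R]_nu) : (exists v, d0 = Kd *m v) ->
  exists g, col_mx (hankel um 0 L M) (hankel (outp Ab Bb Cb D (col_mx xm0 dm0) um) 0 L M) *m g
    = col_mx (stack u L) (stack (outp Ab Bb Cb D (col_mx x0 d0) u) L).
Proof.
move=> hd; have [g] := data_mx_solve x0 u hd.
rewrite !mul_col_mx => /eq_col_mx [hgx hgu].
exists g; rewrite mul_col_mx hgu; congr col_mx.
have hx0 : \sum_(b < M) g b 0 *: xbm b = col_mx x0 d0.
  have := congr1 (fun X => submxcol X ord0) hgx; rewrite hankel_mulmx /stack !mxcolK.
  by under eq_bigr do rewrite !add0n.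
have hu (a : 'I_L) : \sum_(b < M) g b 0 *: um (a + b)%N = u a.
  have := congr1 (fun X => submxcol X a) hgu; rewrite hankel_mulmx /stack !mxcolK.
  by under eq_bigr do rewrite add0n.
rewrite hankel_mulmx /stack; apply: eq_mxcol => a; rewrite /outp.
under eq_bigr do rewrite add0n scalerDr !scalemxAr.
rewrite big_split /= -!mulmx_sumr lincomb_shifted_traj hx0 hu.
congr (Cb *m _ + _); apply: eq_traj => p pa.
have pL : (p < L)%N by have := ltn_ord a; lia.
exact: (hu (Ordinal pL)).
Qed.

End AugmentedSystem.

Unset Implicit Arguments. Set Strict Implicit. Set Printing Implicit Defensive.

Theorem theorem2 (R : realFieldType) (nx nd nu ny N L nu_rk : nat)
  (A : 'M[R]_nx) (Bd : 'M[R]_(nx, nd)) (Ad : 'M[R]_nd) (B : 'M[R]_(nx, nu))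
  (C : 'M[R]_(ny, nx)) (Cd : 'M[R]_(ny, nd)) (D : 'M[R]_(ny, nu))
  (um : nat -> 'cV[R]_nu) (xm0 : 'cV[R]_nx) (dm0 : 'cV[R]_nd) :
  let Ab := AL A Bd Ad in
  let Bb := BL nd B in
  let Cb := row_mx C Cd in
  let xbm := traj Ab Bb (col_mx xm0 dm0) um in
  let ym := outp Ab Bb Cb D (col_mx xm0 dm0) um in
  let Kd := ctrb_mx Ad dm0 in
  controllable A B ->
  \rank Kd = nu_rk -> (1 <= nu_rk)%N -> (nu_rk < nd)%N ->
  pers_exc um 0 (L + (nx + nd)) N ->
  (* (i) *)
  \rank (col_mx (hankel xbm 0 1 (N + (nx + nd))) (hankel um 0 L (N + (nx + nd))))
    = (L * nu + nx + nu_rk)%N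
  /\
  (* (ii) *)
  (forall (x0 : 'cV[R]_nx) (d0 : 'cV[R]_nd) (u : nat -> 'cV[R]_nu),
     (exists v, d0 = Kd *m v) ->
     exists g : 'cV[R]_(N + (nx + nd)),
       col_mx (hankel xbm 0 1 (N + (nx + nd))) (hankel um 0 L (N + (nx + nd))) *m g
       = col_mx (stack (fun _ => col_mx x0 d0) 1) (stack u L))
  /\
  (* (iii) *)
  (forall (x0 : 'cV[R]_nx) (d0 : 'cV[R]_nd) (u : nat -> 'cV[R]_nu),
     (exists v, d0 = Kd *m v) ->
     exists g : 'cV[R]_(N + (nx + nd)),
       col_mx (hankel um 0 L (N + (nx + nd))) (hankel ym 0 L (N + (nx + nd))) *m g
       = col_mx (stack u L) (stack (outp Ab Bb Cb D (col_mx x0 d0) u) L)).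
Proof.
cbv zeta => ctrl rank_Kd _ _ pe.
split; [|split].
- by rewrite rank_data_mx // rank_Kd.
- by move=> x0 d0 u; apply: data_mx_solve.
- by move=> x0 d0 u; apply: io_data_mx_solve.
Qed.
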